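(* Let $\mathcal{N}=\{1,\ldots,N\}$ be a set of players and $\mathcal{M}=\{1,\ldots,M\}$ a set of channels. Let $\mathcal{G}$ be an arbitrary undirected interference graph on vertex set $\mathcal{N}$ (no self-loops), and for each $n\in\mathcal{N}$ let $\mathcal{J}_n\subseteq\mathcal{N}\setminus\{n\}$ denote the set of neighbors of $n$. Each channel $m$ has a random transmission rate $s_m$ taking values in a finite set of nonnegative rates, and all channels have the same expected rate $\mathbf{E}[s_m]=\bar s$. For $a=(a_1,\ldots,a_N)\in\mathcal{M}^N$ let $c_n(a)=|\{k\in\mathcal{J}_n: a_k=a_n\}|$ and $u_n(a)=\bar s/(1+c_n(a))$. Then for every pure strategy Nash equilibrium $a_{NE}$ of the game in which each player $n$ chooses $a_n\in\mathcal{M}$ to maximize $u_n$, the aggregate utility satisfies $$U(a_{NE})=\sum_{n\in\mathcal{N}}u_n(a_{NE})\ \ge\ \sum_{n\in\mathcal{N}}\frac{\bar s\,M}{M+|\mathcal{J}_n|}.$$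
   Context: A pure strategy Nash equilibrium is a profile $a^*\in\mathcal{M}^N$ such that for every $n\in\mathcal{N}$ and every $a_n\in\mathcal{M}$, $u_n(a_n^*,a_{-n}^* )\ge u_n(a_n,a_{-n}^* )$. The quantity $u_n(a)$ is the expected achievable transmission rate of player $n$: with probability $1/(1+c_n(a))$ it obtains the instantaneous rate of its chosen channel, otherwise $0$. *)

From HB Require Import structures.
From mathcomp Require Import all_boot all_order all_algebra.
Set Implicit Arguments. Unset Strict Implicit. Unset Printing Implicit Defensive.
Import Order.TTheory GRing.Theory Num.Theory.
Local Open Scope ring_scope.

Definition nbrs (N : nat) (e : rel 'I_N) (n : 'I_N) : {set 'I_N} :=
  [set k | e n k].

Definition conflicts (N M : nat) (e : rel 'I_N) (a : {ffun 'I_N -> 'I_M})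
  (n : 'I_N) : nat :=
  #|[set k in nbrs e n | a k == a n]|.

Definition util (R : realFieldType) (N M : nat) (e : rel 'I_N) (sbar : R)
  (a : {ffun 'I_N -> 'I_M}) (n : 'I_N) : R :=
  sbar / (1 + (conflicts e a n)%:R).

Definition is_pure_NE (R : realFieldType) (N M : nat) (e : rel 'I_N) (sbar : R)
  (a : {ffun 'I_N -> 'I_M}) : Prop :=
  forall (n : 'I_N) (m : 'I_M), util e sbar (finfun (fun k => if k == n then m else a k)) n
                                 <= util e sbar a n.

Definition aggU (R : realFieldType) (N M : nat) (e : rel 'I_N) (sbar : R)
  (a : {ffun 'I_N -> 'I_M}) : R :=
  \sum_(n < N) util e sbar a n.

From HB Require Import structures.
From mathcomp Require Import all_boot all_order all_algebra.
Import Order.TTheory GRing.Theory Num.Theory.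

(* At an equilibrium player n cannot lower its number of conflicts by moving,
   so c_n is at most the number of neighbours on every channel.  Summing over
   the M channels gives M (1 + c_n) <= M + |J_n|, i.e.
   u_n = sbar / (1 + c_n) >= sbar M / (M + |J_n|). *)

Lemma sum_card_fibres {T I : finType} (J : {set T}) (f : T -> I) :
  (\sum_(i : I) #|[set k in J | f k == i]| = #|J|)%N.
Proof.
rewrite -sum1_card (partition_big f xpredT) //=; apply: eq_bigr => i _.
by rewrite -sum1_card; apply: eq_bigl => k; rewrite inE.
Qed.

Section PureNashEquilibrium.

Variables (N M : nat) (e : rel 'I_N).
Hypothesis e_irr : irreflexive e.

Lemma conflicts_deviation (a : {ffun 'I_N -> 'I_M}) (n : 'I_N) (m : 'I_M) :
  conflicts e (finfun (fun k => if k == n then m else a k)) n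
  = #|[set k in nbrs e n | a k == m]|.
Proof.
apply: eq_card => k; rewrite !inE !ffunE eqxx.
by case: (k =P n) => [->|//]; rewrite e_irr.
Qed.

Local Open Scope ring_scope.

Variables (R : realFieldType) (sbar : R) (aNE : {ffun 'I_N -> 'I_M}).
Hypothesis NE : is_pure_NE e sbar aNE.

Lemma pure_NE_conflicts_le (sbar_gt0 : 0 < sbar) (n : 'I_N) (m : 'I_M) :
  (conflicts e aNE n <= #|[set k in nbrs e n | aNE k == m]|)%N.
Proof.
have := NE n m; rewrite /util conflicts_deviation ler_pM2l // !nat1r.
by rewrite lef_pV2 ?posrE ?ltr0n // ler_nat ltnS.
Qed.

Lemma pure_NE_conflicts_bound (sbar_gt0 : 0 < sbar) (n : 'I_N) :
  (M * (conflicts e aNE n).+1 <= M + #|nbrs e n|)%N.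
Proof.
rewrite mulnS leq_add2l -(sum_card_fibres (nbrs e n) aNE).
rewrite -[M in (M * _)%N]card_ord -sum_nat_const.
by apply: leq_sum => m _; apply: pure_NE_conflicts_le.
Qed.

Lemma pure_NE_util_ge (sbar_ge0 : 0 <= sbar) (n : 'I_N) :
  sbar * M%:R / (M%:R + #|nbrs e n|%:R) <= util e sbar aNE n.
Proof.
have M_gt0 : (0 < M)%N := leq_ltn_trans (leq0n _) (ltn_ord (aNE n)).
have [->|sbar_neq0] := eqVneq sbar 0; first by rewrite /util !mul0r.
have sbar_gt0 : 0 < sbar by rewrite lt_def sbar_neq0.
rewrite /util nat1r; set c := conflicts e aNE n.
rewrite ler_pdivrMr; last by rewrite -natrD ltr0n addn_gt0 M_gt0.
have -> : sbar * M%:R = sbar / c.+1%:R * (M * c.+1)%:R.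
  by rewrite natrM (mulrC M%:R) mulrA divfK ?pnatr_eq0.
rewrite ler_wpM2l ?divr_ge0 // -natrD ler_nat.
exact: pure_NE_conflicts_bound.
Qed.

End PureNashEquilibrium.

Local Open Scope ring_scope.

Lemma expectation_ge0 (R : numDomainType) (K : nat) (p v : 'I_K -> R) :
  (forall k, 0 <= p k) -> (forall k, 0 <= v k) ->
  0 <= \sum_(k < K) p k * v k.
Proof. by move=> p_ge0 v_ge0; apply: sumr_ge0 => k _; apply: mulr_ge0. Qed.

Theorem theorem2 (R : realFieldType) (N M K : nat) (e : rel 'I_N)
  (e_sym : symmetric e) (e_irr : irreflexive e)
  (v p : 'I_M -> 'I_K -> R)
  (v_ge0 : forall m k, 0 <= v m k)
  (p_ge0 : forall m k, 0 <= p m k)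
  (p_sum1 : forall m, \sum_(k < K) p m k = 1)
  (sbar : R)
  (E_eq : forall m, \sum_(k < K) p m k * v m k = sbar)
  (aNE : {ffun 'I_N -> 'I_M}) :
  is_pure_NE e sbar aNE ->
  aggU e sbar aNE >=
    \sum_(n < N) sbar * M%:R / (M%:R + #|nbrs e n|%:R).
Proof.
move=> NE; apply: ler_sum => n _.
apply: pure_NE_util_ge => //.
by rewrite -(E_eq (aNE n)); apply: expectation_ge0.
Qed.
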